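(* Let $\lambda\in 5\mathbb{Z}^+$, $r\in\mathbb{Z}^+$, $\mu>0$ and $\sigma>0$ with $\lambda\sigma\in 5\mathbb{N}$, and let $\Lambda$, $\gamma_k$, $\mathbb{W}_k$ be as in the context. For any complex numbers $\{a_k : k\in\Lambda\}$ with $a_{-k} = \overline{a_k}$, the function $$W(t,x) = \sum_{k\in\Lambda} a_k\,\mathbb{W}_k(t,x)$$ is real valued, and for each $\mathring{R}\in\mathring{\mathcal{M}}$, $$\sum_{k\in\Lambda}(\gamma_k(\mathring{R}))^2\,\frac{1}{|\mathbb{T}^2|}\int_{\mathbb{T}^2}\mathbb{W}_k\mathring{\otimes}\mathbb{W}_{-k}\,dx = -\mathring{R}.$$
   Context: $\mathbb{T}^2=\mathbb{R}^2/(2\pi\mathbb{Z}^2)$. $\Lambda^+ = \{\frac15(3e_1\pm4e_2),\frac15(4e_1\pm3e_2)\}$, $\Lambda^- = -\Lambda^+$, $\Lambda=\Lambda^+\cup\Lambda^-$. $\mathring{\mathcal{M}}$ is the space of real symmetric trace-free $2\times2$ matrices, and $f\mathring{\otimes}g = f\otimes g - \frac12 (f\cdot g)\,\mathrm{Id}$ (extended bilinearly to complex vectors). $\{\gamma_k\}_{k\in\Lambda}$ is a family of positive smooth functions on $\mathring{\mathcal{M}}$ with $\gamma_{-k}=\gamma_k$ and $\mathring{R}=\sum_{k\in\Lambda}\gamma_k(\mathring{R})^2\,(k\mathring{\otimes}k)$ for all $\mathring{R}\in\mathring{\mathcal{M}}$. For $k=(k_1,k_2)$, $k^\perp=(-k_2,k_1)$.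 Define $b_k(x) = i k^\perp e^{i\lambda k\cdot x}$. The 2D Dirichlet kernel is $D_r(x) = \frac{1}{2r+1}\sum_{k\in\Omega_r} e^{ik\cdot x}$ with $\Omega_r=\{(k_1,k_2)\in\mathbb{Z}^2 : -r\le k_i\le r\}$. Define $\eta_k(t,x) = D_r(\lambda\sigma(k\cdot x+\mu t),\ \lambda\sigma k^\perp\cdot x)$ for $k\in\Lambda^+$ and $\eta_k = \eta_{-k}$ for $k\in\Lambda^-$, and $\mathbb{W}_k(t,x) = \eta_k(t,x)\,b_k(x)$. *)

From Stdlib Require Import Reals List ZArith.
From Coquelicot Require Import Coquelicot.
Import ListNotations.
Open Scope R_scope.

Inductive P4 := J1 | J2 | J3 | J4.
(* Lp j ranges over Lambda^+, Lm j = - (Lp j) ranges over Lambda^- *)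
Inductive Lam := Lp (j : P4) | Lm (j : P4).

Definition vecP (j : P4) : R * R :=
  match j with
  | J1 => (3/5, 4/5)
  | J2 => (3/5, -(4/5))
  | J3 => (4/5, 3/5)
  | J4 => (4/5, -(3/5))
  end.

Definition vec (k : Lam) : R * R :=
  match k with
  | Lp j => vecP j
  | Lm j => (- fst (vecP j), - snd (vecP j))
  end.

Definition lneg (k : Lam) : Lam :=
  match k with Lp j => Lm j | Lm j => Lp j end.

Definition all_Lam : list Lam :=
  [Lp J1; Lp J2; Lp J3; Lp J4; Lm J1; Lm J2; Lm J3; Lm J4].

Definition perp (k : R * R) : R * R := (- snd k, fst k).
Definition dot (k x : R * R) : R := fst k * fst x + snd k * snd x.

Record RMat := mkRMat { r11 : R; r12 : R; r21 : R; r22 : R }.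
Definition RMat0 := mkRMat 0 0 0 0.
Definition RMadd (A B : RMat) := mkRMat (r11 A + r11 B) (r12 A + r12 B) (r21 A + r21 B) (r22 A + r22 B).
Definition RMscale (c : R) (A : RMat) := mkRMat (c * r11 A) (c * r12 A) (c * r21 A) (c * r22 A).
Definition RMopp (A : RMat) := RMscale (-1) A.

Definition tracefree_sym (A : RMat) : Prop := r12 A = r21 A /\ r11 A + r22 A = 0.
Definition tfs_of (a b : R) : RMat := mkRMat a b b (- a).

Definition rotimes0 (f g : R * R) : RMat :=
  mkRMat (fst f * fst g - / 2 * dot f g) (fst f * snd g)
         (snd f * fst g) (snd f * snd g - / 2 * dot f g).

Record CMat := mkCMat { c11 : C; c12 : C; c21 : C; c22 : C }.
Definition CMat0 := ( mkCMat 0 0 0 0)%C.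
Definition CMadd (A B : CMat) := ( mkCMat (c11 A + c11 B) (c12 A + c12 B) (c21 A + c21 B) (c22 A + c22 B))%C.
Definition CMscale (c : C) (A : CMat) := ( mkCMat (c * c11 A) (c * c12 A) (c * c21 A) (c * c22 A))%C.
Definition CM_of_RM (A : RMat) := mkCMat (RtoC (r11 A)) (RtoC (r12 A)) (RtoC (r21 A)) (RtoC (r22 A)).

Definition cdot (f g : C * C) : C := ( fst f * fst g + snd f * snd g)%C.
Definition cotimes0 (f g : C * C) : CMat := (
  mkCMat (fst f * fst g - / 2 * cdot f g) (fst f * snd g)
         (snd f * fst g) (snd f * snd g - / 2 * cdot f g))%C.

Definition cexpi (th : R) : C := (cos th, sin th).

Definition bk (lam : R) (k : Lam) (x : R * R) : C * C := (
  let kp := perp (vec k) in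
  let e := cexpi (lam * dot (vec k) x) in
  (Ci * RtoC (fst kp) * e, Ci * RtoC (snd kp) * e))%C.

Definition range_r (r : nat) : list Z :=
  map (fun n => (Z.of_nat n - Z.of_nat r)%Z) (seq 0 (2 * r + 1)).

Definition Csum {A} (f : A -> C) (l : list A) : C := (
  fold_right (fun a acc => f a + acc) 0 l)%C.
Definition CMsum {A} (f : A -> CMat) (l : list A) : CMat := (
  fold_right (fun a acc => CMadd (f a) acc) CMat0 l)%C.
Definition RMsum {A} (f : A -> RMat) (l : list A) : RMat :=
  fold_right (fun a acc => RMadd (f a) acc) RMat0 l.
Definition CVsum {A} (f : A -> C * C) (l : list A) : C * C := (
  fold_right (fun a acc => (fst (f a) + fst acc, snd (f a) + snd acc)) (RtoC 0, RtoC 0) l)%C.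

Definition Dirichlet (r : nat) (y : R * R) : C := (
  RtoC (/ INR (2 * r + 1)) *
  Csum (fun k1 : Z => Csum (fun k2 : Z =>
          cexpi (IZR k1 * fst y + IZR k2 * snd y)) (range_r r)) (range_r r))%C.

(* eta_k(t,x) = D_r(lam sig (k.x + mu t), lam sig k^perp.x) for k in Lambda^+,
   eta_k = eta_{-k} for k in Lambda^- *)
Definition eta (lam sig mu : R) (r : nat) (k : Lam) (t : R) (x : R * R) : C :=
  let kp := match k with Lp j => vecP j | Lm j => vecP j end in
  Dirichlet r (lam * sig * (dot kp x + mu * t), lam * sig * dot (perp kp) x).

Definition Wk (lam sig mu : R) (r : nat) (k : Lam) (t : R) (x : R * R) : C * C := (
  let e := eta lam sig mu r k t x in
  let b := bk lam k x in
  (e * fst b, e * snd b))%C.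

Definition Wsum (a : Lam -> C) (lam sig mu : R) (r : nat) (t : R) (x : R * R) : C * C := (
  CVsum (fun k => let w := Wk lam sig mu r k t x in (a k * fst w, a k * snd w)) all_Lam)%C.

(* ---------- averages over T^2 = R^2/(2 pi Z^2), fundamental domain [0,2pi]^2 ---------- *)
Definition CInt2 (f : R -> R -> C) : C :=
  @RInt C_R_CompleteNormedModule
    (fun x1 => @RInt C_R_CompleteNormedModule (fun x2 => f x1 x2) 0 (2 * PI)) 0 (2 * PI).

Definition avgT2 (F : R * R -> CMat) : CMat :=
  CMscale (RtoC (/ (2 * PI * (2 * PI))))
    (mkCMat (CInt2 (fun x1 x2 => c11 (F (x1, x2)))) (CInt2 (fun x1 x2 => c12 (F (x1, x2))))
            (CInt2 (fun x1 x2 => c21 (F (x1, x2)))) (CInt2 (fun x1 x2 => c22 (F (x1, x2))))).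

Inductive partials (f : R -> R -> R) : (R -> R -> R) -> Prop :=
  | part0 : partials f f
  | part1 g : partials f g -> partials f (fun x y => Derive (fun x' => g x' y) x)
  | part2 g : partials f g -> partials f (fun x y => Derive (fun y' => g x y') y).

Definition smooth2 (f : R -> R -> R) : Prop :=
  forall g, partials f g ->
    (forall x y, ex_derive (fun x' => g x' y) x /\ ex_derive (fun y' => g x y') y) /\
    (forall x y, continuity_2d_pt g x y).

From Stdlib Require Import Reals List ZArith Lra Lia FunctionalExtensionality Permutation.
From Coquelicot Require Import Coquelicot.
Open Scope R_scope.

(* Since Omega_r is symmetric, the Dirichlet kernel and hence eta_k is real; with
   b_{-k} = conj b_k this gives W_{-k} = conj W_k, so pairing k with -k makes W real.
   Pointwise W_k (o) W_{-k} = eta_k^2 (k^perp (o) k^perp), and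
   k^perp (o) k^perp = - k (o) k for every vector k.  Writing 5k = (P,Q) in Z^2 and
   lambda sigma = 5m, the argument of eta_k is x |-> m [[P,Q],[-Q,P]] x + const, so
   expanding D_r^2 yields exponentials with integer frequencies m (uP - vQ, uQ + vP),
   which vanish only for u = v = 0 because P^2 + Q^2 <> 0.  Hence the mean of eta_k^2
   is (2r+1)^-2 #{(a,b) in Omega_r x Omega_r : a + b = 0} = 1, and summing gamma_k^2 against
   k^perp (o) k^perp gives - sum gamma_k^2 k (o) k = - R. *)

Lemma cexpi_add (a b : R) : (cexpi a * cexpi b)%C = cexpi (a + b).
Proof.
  unfold cexpi, Cmult; simpl. rewrite cos_plus, sin_plus.
  apply injective_projections; simpl; ring.
Qed.

Lemma cexpi_0 : cexpi 0 = RtoC 1.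
Proof. unfold cexpi. rewrite cos_0, sin_0. reflexivity. Qed.

Lemma Cconj_cexpi (a : R) : Cconj (cexpi a) = cexpi (- a).
Proof. unfold cexpi, Cconj; simpl. rewrite cos_neg, sin_neg. reflexivity. Qed.

Lemma cexpi_add_2PI_Z (a : R) (n : Z) : cexpi (a + 2 * PI * IZR n) = cexpi a.
Proof.
  assert (Hsin : sin (PI * IZR n) = 0) by (apply sin_eq_0_1; exists n; ring).
  assert (Hsin2 : sin (2 * PI * IZR n) = 0)
    by (apply sin_eq_0_1; exists (2 * n)%Z; rewrite mult_IZR; ring).
  assert (Hcos2 : cos (2 * PI * IZR n) = 1).
  { rewrite Rmult_assoc, cos_2a_sin, Hsin. ring. }
  rewrite <- cexpi_add. unfold cexpi at 2. rewrite Hsin2, Hcos2.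
  unfold cexpi, Cmult; apply injective_projections; simpl; ring.
Qed.

Lemma Csum_ext {A : Type} (l : list A) (f g : A -> C) :
  (forall i, In i l -> f i = g i) -> Csum f l = Csum g l.
Proof.
  induction l as [|a l IH]; intros H; simpl; [reflexivity|].
  rewrite (H a (or_introl eq_refl)), IH; [reflexivity|].
  intros i Hi. apply H. right. exact Hi.
Qed.

Lemma Csum_eq0 {A : Type} (l : list A) (f : A -> C) :
  (forall i, In i l -> f i = RtoC 0) -> Csum f l = RtoC 0.
Proof.
  induction l as [|a l IH]; intros H; simpl; [reflexivity|].
  rewrite (H a (or_introl eq_refl)), IH; [ring|].
  intros i Hi. apply H. right. exact Hi.
Qed.

Lemma Csum_const {A : Type} (l : list A) (c : C) :
  Csum (fun _ => c) l = (RtoC (INR (length l)) * c)%C.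
Proof.
  induction l as [|a l IH]; simpl Csum.
  - apply injective_projections; simpl; ring.
  - rewrite IH, length_cons, S_INR, RtoC_plus. ring.
Qed.

Lemma Csum_mult_l {A : Type} (l : list A) (f : A -> C) (c : C) :
  (c * Csum f l)%C = Csum (fun i => c * f i)%C l.
Proof. induction l as [|a l IH]; simpl; [ring | rewrite <- IH; ring]. Qed.

Lemma Csum_mult {A B : Type} (l1 : list A) (l2 : list B) (f : A -> C) (g : B -> C) :
  (Csum f l1 * Csum g l2)%C = Csum (fun i => Csum (fun j => f i * g j) l2)%C l1.
Proof.
  induction l1 as [|a l1 IH]; simpl; [ring|].
  rewrite <- IH, <- Csum_mult_l. ring.
Qed.

Lemma Csum_conj {A : Type} (l : list A) (f : A -> C) :
  Cconj (Csum f l) = Csum (fun i => Cconj (f i)) l.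
Proof.
  induction l as [|a l IH]; simpl.
  - apply injective_projections; simpl; ring.
  - rewrite Cplus_conj, IH. reflexivity.
Qed.

Lemma Csum_map {A B : Type} (l : list B) (h : B -> A) (f : A -> C) :
  Csum f (map h l) = Csum (fun i => f (h i)) l.
Proof. induction l as [|a l IH]; simpl; congruence. Qed.

Lemma Csum_perm {A : Type} (l l' : list A) (f : A -> C) :
  Permutation l l' -> Csum f l = Csum f l'.
Proof. induction 1; simpl; [reflexivity | congruence | ring | congruence]. Qed.

Lemma Csum_indicator {A : Type} (l : list A) (p : A -> bool) (z : A) (c : C) :
  NoDup l -> In z l -> (forall i, In i l -> p i = true <-> i = z) ->
  Csum (fun i => if p i then c else RtoC 0) l = c.
Proof.
  induction l as [|a l IH]; intros Hnd Hz Hp; [destruct Hz|].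
  inversion Hnd as [|? ? Ha Hl]; subst. simpl.
  destruct Hz as [<-|Hz].
  - rewrite (proj2 (Hp a (or_introl eq_refl)) eq_refl), Csum_eq0; [ring|].
    intros i Hi. destruct (p i) eqn:E; [|reflexivity].
    apply Hp in E; [subst; contradiction | simpl; auto].
  - destruct (p a) eqn:E.
    + apply Hp in E; [subst; contradiction | simpl; auto].
    + rewrite IH by (simpl in *; auto). ring.
Qed.

Lemma in_range_r (r : nat) (k : Z) :
  In k (range_r r) <-> (- Z.of_nat r <= k <= Z.of_nat r)%Z.
Proof.
  unfold range_r. rewrite in_map_iff. split.
  - intros [n [<- Hn]]. apply in_seq in Hn. lia.
  - intros Hk. exists (Z.to_nat (k + Z.of_nat r)). rewrite in_seq. lia.
Qed.

Lemma NoDup_range_r (r : nat) : NoDup (range_r r).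
Proof.
  apply FinFun.Injective_map_NoDup; [intros a b Hab; lia | apply seq_NoDup].
Qed.

Lemma length_range_r (r : nat) : length (range_r r) = (2 * r + 1)%nat.
Proof. unfold range_r. rewrite length_map, length_seq. reflexivity. Qed.

Lemma Csum_range_r_opp (r : nat) (f : Z -> C) :
  Csum (fun k => f (- k)%Z) (range_r r) = Csum f (range_r r).
Proof.
  rewrite <- (Csum_map _ Z.opp f). apply Csum_perm, NoDup_Permutation.
  - apply FinFun.Injective_map_NoDup; [intros a b Hab; lia | apply NoDup_range_r].
  - apply NoDup_range_r.
  - intros k. rewrite in_map_iff, in_range_r. split.
    + intros [l [<- Hl]]. apply in_range_r in Hl. lia.
    + intros Hk. exists (- k)%Z. rewrite in_range_r. lia.
Qed.

Lemma Csum_range_r_eqb (r : nat) (k : Z) (c : C) : In k (range_r r) ->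
  Csum (fun l => if (k + l =? 0)%Z then c else RtoC 0) (range_r r) = c.
Proof.
  intros Hk. apply (Csum_indicator _ _ (- k)%Z); [apply NoDup_range_r | |].
  - apply in_range_r in Hk. apply in_range_r. lia.
  - intros l _. rewrite Z.eqb_eq. lia.
Qed.

Lemma Csum_range_r_diagonals (r : nat) (c : C) :
  Csum (fun k1 => Csum (fun l1 => Csum (fun k2 => Csum (fun l2 =>
    if ((k1 + l1 =? 0)%Z && (k2 + l2 =? 0)%Z)%bool then c else RtoC 0)
      (range_r r)) (range_r r)) (range_r r)) (range_r r)
  = (RtoC (INR (2 * r + 1)) * (RtoC (INR (2 * r + 1)) * c))%C.
Proof.
  set (N := RtoC (INR (2 * r + 1))).
  transitivity (Csum (fun k1 => Csum (fun l1 =>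
    if (k1 + l1 =? 0)%Z then (N * c)%C else RtoC 0) (range_r r)) (range_r r)).
  - apply Csum_ext; intros k1 _; apply Csum_ext; intros l1 _.
    destruct (k1 + l1 =? 0)%Z; simpl.
    + unfold N. rewrite <- length_range_r, <- Csum_const.
      apply Csum_ext; intros k2 Hk2. apply Csum_range_r_eqb, Hk2.
    + apply Csum_eq0; intros; apply Csum_eq0; reflexivity.
  - rewrite (Csum_ext _ _ (fun _ => N * c)%C) by (intros; apply Csum_range_r_eqb; auto).
    rewrite Csum_const, length_range_r. reflexivity.
Qed.

Lemma Dirichlet_conj (r : nat) (y : R * R) : Cconj (Dirichlet r y) = Dirichlet r y.
Proof.
  unfold Dirichlet. rewrite Cmult_conj, Csum_conj. f_equal.
  { apply injective_projections; simpl; ring. }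
  etransitivity; [|apply Csum_range_r_opp]. apply Csum_ext; intros k1 _.
  rewrite Csum_conj. etransitivity; [|apply Csum_range_r_opp]. apply Csum_ext; intros k2 _.
  rewrite Cconj_cexpi, !opp_IZR. f_equal. ring.
Qed.

Lemma Dirichlet_mult_self (r : nat) (y : R * R) :
  (Dirichlet r y * Dirichlet r y)%C =
  (RtoC (/ INR (2 * r + 1)) * RtoC (/ INR (2 * r + 1)) *
   Csum (fun k1 => Csum (fun l1 => Csum (fun k2 => Csum (fun l2 =>
     cexpi (IZR (k1 + l1) * fst y + IZR (k2 + l2) * snd y))
       (range_r r)) (range_r r)) (range_r r)) (range_r r))%C.
Proof.
  unfold Dirichlet. set (c := RtoC _). set (S := Csum _ _).
  transitivity (c * c * (S * S))%C; [ring | f_equal].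
  unfold S. rewrite Csum_mult. apply Csum_ext; intros k1 _. apply Csum_ext; intros l1 _.
  rewrite Csum_mult. apply Csum_ext; intros k2 _. apply Csum_ext; intros l2 _.
  rewrite cexpi_add, !plus_IZR. f_equal. ring.
Qed.

Lemma is_RInt_Cmult_l (f : R -> C) (a b : R) (l c : C) :
  is_RInt f a b l -> is_RInt (fun x => c * f x)%C a b (c * l)%C.
Proof.
  destruct c as [c1 c2]. intros Hf.
  assert (H1 := is_RInt_fct_extend_fst (U:=R_NormedModule) (V:=R_NormedModule) _ _ _ _ Hf).
  assert (H2 := is_RInt_fct_extend_snd (U:=R_NormedModule) (V:=R_NormedModule) _ _ _ _ Hf).
  apply (is_RInt_ext (fun x => (c1 * fst (f x) - c2 * snd (f x), c1 * snd (f x) + c2 * fst (f x)))).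
  { intros x _. destruct (f x). reflexivity. }
  replace ((c1, c2) * l)%C with (c1 * fst l - c2 * snd l, c1 * snd l + c2 * fst l)
    by (destruct l; reflexivity).
  apply (is_RInt_fct_extend_pair (U:=R_NormedModule) (V:=R_NormedModule)); simpl.
  - apply (is_RInt_minus (V:=R_NormedModule)); apply (is_RInt_scal (V:=R_NormedModule)); assumption.
  - apply (is_RInt_plus (V:=R_NormedModule)); apply (is_RInt_scal (V:=R_NormedModule)); assumption.
Qed.

Lemma is_RInt_C_const (b : R) (c : C) : is_RInt (fun _ => c) 0 b (RtoC b * c)%C.
Proof.
  replace (RtoC b * c)%C with (@scal R_Ring C_R_ModuleSpace (b - 0) c).
  - apply (is_RInt_const (V:=C_R_NormedModule)).
  - destruct c. unfold scal; simpl. unfold prod_scal, scal, mult; simpl.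
    apply injective_projections; simpl; unfold mult; simpl; ring.
Qed.

Lemma is_RInt_cos_affine (B E a b : R) : B <> 0 ->
  is_RInt (fun x => cos (B * x + E)) a b ((sin (B * b + E) - sin (B * a + E)) / B).
Proof.
  intros HB.
  replace ((sin (B * b + E) - sin (B * a + E)) / B)
    with (minus (sin (B * b + E) / B) (sin (B * a + E) / B))
    by (unfold minus, plus, opp; simpl; field; exact HB).
  apply (is_RInt_derive (V:=R_CompleteNormedModule) (fun x => sin (B * x + E) / B));
    intros x _.
  - auto_derive; [exact I|]. field. exact HB.
  - apply (ex_derive_continuous (K:=R_AbsRing) (V:=R_NormedModule)). auto_derive. exact I.
Qed.

Lemma is_RInt_sin_affine (B E a b : R) : B <> 0 ->
  is_RInt (fun x => sin (B * x + E)) a b ((cos (B * a + E) - cos (B * b + E)) / B).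
Proof.
  intros HB.
  replace ((cos (B * a + E) - cos (B * b + E)) / B)
    with (minus (- cos (B * b + E) / B) (- cos (B * a + E) / B))
    by (unfold minus, plus, opp; simpl; field; exact HB).
  apply (is_RInt_derive (V:=R_CompleteNormedModule) (fun x => - cos (B * x + E) / B));
    intros x _.
  - auto_derive; [exact I|]. field. exact HB.
  - apply (ex_derive_continuous (K:=R_AbsRing) (V:=R_NormedModule)). auto_derive. exact I.
Qed.

Lemma is_RInt_cexpi_Z (n : Z) (E : R) :
  is_RInt (fun x => cexpi (IZR n * x + E)) 0 (2 * PI)
    (if (n =? 0)%Z then (RtoC (2 * PI) * cexpi E)%C else RtoC 0).
Proof.
  destruct (Z.eqb_spec n 0) as [->|Hn].
  - apply (is_RInt_ext (fun _ => cexpi E)); [intros; f_equal; ring|].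
    apply is_RInt_C_const.
  - assert (HB : IZR n <> 0) by (apply not_0_IZR; exact Hn).
    assert (Hper : cexpi (IZR n * (2 * PI) + E) = cexpi E).
    { rewrite <- (cexpi_add_2PI_Z E n). f_equal. ring. }
    assert (Hcos : cos (IZR n * (2 * PI) + E) = cos E) by exact (f_equal fst Hper).
    assert (Hsin : sin (IZR n * (2 * PI) + E) = sin E) by exact (f_equal snd Hper).
    assert (Hc := is_RInt_cos_affine (IZR n) E 0 (2 * PI) HB).
    assert (Hs := is_RInt_sin_affine (IZR n) E 0 (2 * PI) HB).
    rewrite Rmult_0_r, Rplus_0_l in Hc, Hs.
    rewrite Hcos, Rminus_diag, Rdiv_0_l in Hs.
    rewrite Hsin, Rminus_diag, Rdiv_0_l in Hc.
    exact (is_RInt_fct_extend_pair (U:=R_NormedModule) (V:=R_NormedModule)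
      (fun x => cexpi (IZR n * x + E)) _ _ _ _ Hc Hs).
Qed.

Definition is_RInt_T2 (f : R -> R -> C) (v : C) : Prop :=
  exists g : R -> C,
    (forall x1, is_RInt (f x1) 0 (2 * PI) (g x1)) /\ is_RInt g 0 (2 * PI) v.

Lemma CInt2_correct (f : R -> R -> C) (v : C) : is_RInt_T2 f v -> CInt2 f = v.
Proof.
  intros [g [Hin Hout]]. unfold CInt2.
  rewrite (RInt_ext (V:=C_R_CompleteNormedModule) _ g).
  - exact (is_RInt_unique (V:=C_R_CompleteNormedModule) _ _ _ _ Hout).
  - intros x1 _. exact (is_RInt_unique (V:=C_R_CompleteNormedModule) _ _ _ _ (Hin x1)).
Qed.

Lemma is_RInt_T2_ext (f g : R -> R -> C) (v : C) :
  (forall x1 x2, f x1 x2 = g x1 x2) -> is_RInt_T2 g v -> is_RInt_T2 f v.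
Proof.
  intros Hfg Hg. replace f with g; [exact Hg|].
  extensionality x1. extensionality x2. symmetry. apply Hfg.
Qed.

Lemma is_RInt_T2_Cmult_l (f : R -> R -> C) (v c : C) :
  is_RInt_T2 f v -> is_RInt_T2 (fun x1 x2 => c * f x1 x2)%C (c * v)%C.
Proof.
  intros [g [Hin Hout]]. exists (fun x1 => c * g x1)%C.
  split; [intros x1|]; apply is_RInt_Cmult_l; auto.
Qed.

Lemma is_RInt_T2_plus (f g : R -> R -> C) (v w : C) :
  is_RInt_T2 f v -> is_RInt_T2 g w ->
  is_RInt_T2 (fun x1 x2 => f x1 x2 + g x1 x2)%C (v + w)%C.
Proof.
  intros [F [HFin HFout]] [G [HGin HGout]]. exists (fun x1 => F x1 + G x1)%C. split.
  - intros x1. exact (is_RInt_plus (V:=C_R_NormedModule) _ _ _ _ _ _ (HFin x1) (HGin x1)).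
  - exact (is_RInt_plus (V:=C_R_NormedModule) _ _ _ _ _ _ HFout HGout).
Qed.

Lemma is_RInt_C_zero (b : R) : is_RInt (fun _ => RtoC 0) 0 b (RtoC 0).
Proof. assert (H := is_RInt_C_const b (RtoC 0)). rewrite Cmult_0_r in H. exact H. Qed.

Lemma is_RInt_T2_zero : is_RInt_T2 (fun _ _ => RtoC 0) (RtoC 0).
Proof. exists (fun _ => RtoC 0). split; [intros _|]; apply is_RInt_C_zero. Qed.

Lemma is_RInt_T2_Csum {A : Type} (l : list A) (f : A -> R -> R -> C) (v : A -> C) :
  (forall i, In i l -> is_RInt_T2 (f i) (v i)) ->
  is_RInt_T2 (fun x1 x2 => Csum (fun i => f i x1 x2) l) (Csum v l).
Proof.
  induction l as [|a l IH]; intros H; simpl.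
  - exact is_RInt_T2_zero.
  - apply is_RInt_T2_plus; [apply H; left; reflexivity|].
    apply IH. intros i Hi. apply H. right. exact Hi.
Qed.

Lemma is_RInt_T2_cexpi (a b : Z) (D : R) :
  is_RInt_T2 (fun x1 x2 => cexpi (IZR a * x1 + IZR b * x2 + D))
    (if ((a =? 0)%Z && (b =? 0)%Z)%bool then (RtoC (2 * PI * (2 * PI)) * cexpi D)%C
     else RtoC 0).
Proof.
  exists (fun x1 => if (b =? 0)%Z then (RtoC (2 * PI) * cexpi (IZR a * x1 + D))%C
                    else RtoC 0). split.
  - intros x1. apply (is_RInt_ext (fun x2 => cexpi (IZR b * x2 + (IZR a * x1 + D)))).
    { intros x2 _. f_equal. ring. }
    apply is_RInt_cexpi_Z.
  - destruct (b =? 0)%Z.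
    + rewrite Bool.andb_true_r.
      replace (if (a =? 0)%Z then (RtoC (2 * PI * (2 * PI)) * cexpi D)%C else RtoC 0)
        with (RtoC (2 * PI) * if (a =? 0)%Z then (RtoC (2 * PI) * cexpi D)%C else RtoC 0)%C
        by (destruct (a =? 0)%Z;
            [rewrite (RtoC_mult (2 * PI)); ring | rewrite Cmult_0_r; reflexivity]).
      apply is_RInt_Cmult_l, is_RInt_cexpi_Z.
    + rewrite Bool.andb_false_r. apply is_RInt_C_zero.
Qed.

Lemma conformal_Z_eq0 (m P Q u v : Z) :
  m <> 0%Z -> (P * P + Q * Q <> 0)%Z ->
  ((m * (u * P - v * Q) =? 0)%Z && (m * (u * Q + v * P) =? 0)%Z)%bool
  = ((u =? 0)%Z && (v =? 0)%Z)%bool.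
Proof.
  intros Hm HPQ. apply Bool.eq_iff_eq_true. rewrite !Bool.andb_true_iff, !Z.eqb_eq.
  split; [|intros [-> ->]; split; ring].
  intros [H1 H2].
  apply Z.mul_eq_0 in H1 as [|H1]; [contradiction|].
  apply Z.mul_eq_0 in H2 as [|H2]; [contradiction|].
  assert (Hu : (u * (P * P + Q * Q) = P * (u * P - v * Q) + Q * (u * Q + v * P))%Z) by ring.
  assert (Hv : (v * (P * P + Q * Q) = P * (u * Q + v * P) - Q * (u * P - v * Q))%Z) by ring.
  rewrite H1, H2 in Hu, Hv. nia.
Qed.

(* [m [[P,Q],[-Q,P]] x + (c,0)]: the argument of eta_k when 5k = (P,Q) and
   lambda sigma = 5m. *)
Definition conformal_affine (m P Q : Z) (c x1 x2 : R) : R * R :=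
  (IZR m * (IZR P * x1 + IZR Q * x2) + c, IZR m * (IZR P * x2 - IZR Q * x1)).

Lemma is_RInt_T2_cexpi_conformal (m P Q u v : Z) (c : R) :
  m <> 0%Z -> (P * P + Q * Q <> 0)%Z ->
  is_RInt_T2 (fun x1 x2 => cexpi (IZR u * fst (conformal_affine m P Q c x1 x2)
                                  + IZR v * snd (conformal_affine m P Q c x1 x2)))
    (if ((u =? 0)%Z && (v =? 0)%Z)%bool then RtoC (2 * PI * (2 * PI)) else RtoC 0).
Proof.
  intros Hm HPQ.
  apply (is_RInt_T2_ext _ (fun x1 x2 =>
    cexpi (IZR (m * (u * P - v * Q)) * x1 + IZR (m * (u * Q + v * P)) * x2 + IZR u * c))).
  { intros x1 x2. unfold conformal_affine; simpl. f_equal.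
    rewrite !mult_IZR, minus_IZR, plus_IZR, !mult_IZR. ring. }
  replace (if ((u =? 0)%Z && (v =? 0)%Z)%bool then RtoC (2 * PI * (2 * PI)) else RtoC 0)
    with (if ((u =? 0)%Z && (v =? 0)%Z)%bool
          then (RtoC (2 * PI * (2 * PI)) * cexpi (IZR u * c))%C else RtoC 0).
  - rewrite <- (conformal_Z_eq0 m P Q) by assumption. apply is_RInt_T2_cexpi.
  - destruct (Z.eqb_spec u 0) as [->|]; [|reflexivity].
    rewrite Rmult_0_l, cexpi_0, Cmult_1_r. reflexivity.
Qed.

Lemma is_RInt_T2_Dirichlet_sqr (r : nat) (m P Q : Z) (c : R) :
  m <> 0%Z -> (P * P + Q * Q <> 0)%Z ->
  is_RInt_T2 (fun x1 x2 => Dirichlet r (conformal_affine m P Q c x1 x2) *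
                           Dirichlet r (conformal_affine m P Q c x1 x2))%C
    (RtoC (2 * PI * (2 * PI))).
Proof.
  intros Hm HPQ.
  eapply is_RInt_T2_ext; [intros x1 x2; apply Dirichlet_mult_self|].
  set (N := INR (2 * r + 1)).
  assert (HN : N <> 0) by (apply not_0_INR; lia).
  replace (RtoC (2 * PI * (2 * PI))) with (RtoC (/ N) * RtoC (/ N) *
    Csum (fun k1 => Csum (fun l1 => Csum (fun k2 => Csum (fun l2 =>
      if ((k1 + l1 =? 0)%Z && (k2 + l2 =? 0)%Z)%bool then RtoC (2 * PI * (2 * PI))
      else RtoC 0) (range_r r)) (range_r r)) (range_r r)) (range_r r))%C.
  - apply is_RInt_T2_Cmult_l.
    apply is_RInt_T2_Csum; intros k1 _. apply is_RInt_T2_Csum; intros l1 _.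
    apply is_RInt_T2_Csum; intros k2 _. apply is_RInt_T2_Csum; intros l2 _.
    apply is_RInt_T2_cexpi_conformal; assumption.
  - rewrite Csum_range_r_diagonals. fold N.
    transitivity (RtoC (/ N * N) * RtoC (/ N * N) * RtoC (2 * PI * (2 * PI)))%C.
    + rewrite !RtoC_mult. ring.
    + rewrite Rinv_l by exact HN. ring.
Qed.

Lemma avgT2_CMscale (f : R * R -> C) (M : CMat) (v : C) :
  is_RInt_T2 (fun x1 x2 => f (x1, x2)) v ->
  avgT2 (fun x => CMscale (f x) M) = CMscale (RtoC (/ (2 * PI * (2 * PI))) * v) M.
Proof.
  intros Hf.
  assert (Hentry : forall z, CInt2 (fun x1 x2 => f (x1, x2) * z)%C = (z * v)%C).
  { intros z. apply CInt2_correct.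
    apply (is_RInt_T2_ext _ (fun x1 x2 => z * f (x1, x2))%C); [intros; ring|].
    apply is_RInt_T2_Cmult_l, Hf. }
  unfold avgT2, CMscale; cbn [c11 c12 c21 c22]. rewrite !Hentry. f_equal; ring.
Qed.

Definition Cscalev (z : C) (v : R * R) : C * C := (z * RtoC (fst v), z * RtoC (snd v))%C.
Definition Cconjv (w : C * C) : C * C := (Cconj (fst w), Cconj (snd w)).

Lemma Cconjv_Cscalev (z : C) (v : R * R) : Cconjv (Cscalev z v) = Cscalev (Cconj z) v.
Proof.
  unfold Cconjv, Cscalev; simpl. rewrite !Cmult_conj.
  f_equal; f_equal; apply injective_projections; simpl; ring.
Qed.

Lemma cotimes0_Cscalev (z w : C) (v : R * R) :
  cotimes0 (Cscalev z v) (Cscalev w v) = CMscale (z * w) (CM_of_RM (rotimes0 v v)).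
Proof.
  destruct v as [a b]. unfold cotimes0, cdot, Cscalev, CMscale, CM_of_RM, rotimes0, dot.
  cbn [fst snd r11 r12 r21 r22].
  destruct z as [z1 z2], w as [w1 w2].
  f_equal; unfold RtoC, Cmult, Cplus, Cminus, Copp, Cinv;
    apply injective_projections; simpl; field.
Qed.

Lemma rotimes0_perp (v : R * R) : rotimes0 (perp v) (perp v) = RMopp (rotimes0 v v).
Proof.
  destruct v as [a b]. unfold rotimes0, RMopp, RMscale, perp, dot; simpl. f_equal; field.
Qed.

Lemma fst_CVsum {A : Type} (f : A -> C * C) (l : list A) :
  fst (CVsum f l) = Csum (fun i => fst (f i)) l.
Proof. induction l as [|a l IH]; simpl; congruence. Qed.

Lemma snd_CVsum {A : Type} (f : A -> C * C) (l : list A) :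
  snd (CVsum f l) = Csum (fun i => snd (f i)) l.
Proof. induction l as [|a l IH]; simpl; congruence. Qed.

Lemma Im_Csum_all_Lam (f : Lam -> C) :
  (forall k, f (lneg k) = Cconj (f k)) -> Im (Csum f all_Lam) = 0.
Proof.
  intros Hf.
  assert (Hm : forall j, Im (f (Lm j)) = - Im (f (Lp j))).
  { intros j. rewrite <- im_conj, <- Hf. reflexivity. }
  unfold all_Lam; simpl Csum. rewrite !im_plus, !Hm, im_RtoC. ring.
Qed.

Lemma CMsum_perp_rotimes0 {A : Type} (l : list A) (g : A -> R) (v : A -> R * R) :
  CMsum (fun i => CMscale (RtoC (g i)) (CM_of_RM (rotimes0 (perp (v i)) (perp (v i))))) l
  = CM_of_RM (RMopp (RMsum (fun i => RMscale (g i) (rotimes0 (v i) (v i))) l)).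
Proof.
  induction l as [|a l IH]; simpl.
  - unfold CMat0, CM_of_RM, RMopp, RMscale, RMat0; simpl. f_equal; f_equal; ring.
  - rewrite IH, rotimes0_perp.
    unfold CMadd, CMscale, CM_of_RM, RMopp, RMscale, RMadd; cbn.
    f_equal; rewrite <- RtoC_mult, <- RtoC_plus; f_equal; ring.
Qed.

Section BuildingBlocks.

Variables (lam sig mu : R) (r : nat).

Lemma eta_lneg (k : Lam) (t : R) (x : R * R) :
  eta lam sig mu r (lneg k) t x = eta lam sig mu r k t x.
Proof. destruct k; reflexivity. Qed.

Lemma Cconj_eta (k : Lam) (t : R) (x : R * R) :
  Cconj (eta lam sig mu r k t x) = eta lam sig mu r k t x.
Proof. apply Dirichlet_conj. Qed.

Lemma Wk_Cscalev (k : Lam) (t : R) (x : R * R) :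
  Wk lam sig mu r k t x =
  Cscalev (eta lam sig mu r k t x * (Ci * cexpi (lam * dot (vec k) x))) (perp (vec k)).
Proof. unfold Wk, bk, Cscalev; simpl. f_equal; ring. Qed.

Lemma Wk_lneg (k : Lam) (t : R) (x : R * R) :
  Wk lam sig mu r (lneg k) t x = Cconjv (Wk lam sig mu r k t x).
Proof.
  rewrite !Wk_Cscalev, Cconjv_Cscalev, eta_lneg, !Cmult_conj, Cconj_eta, Cconj_cexpi.
  unfold Cscalev.
  assert (Hvec : vec (lneg k) = (- fst (vec k), - snd (vec k))).
  { destruct k as [j|j]; simpl; [reflexivity|].
    destruct (vecP j); simpl; f_equal; ring. }
  rewrite Hvec. destruct (vec k) as [a b]. unfold perp, dot; simpl.
  replace (lam * (- a * fst x + - b * snd x)) with (- (lam * (a * fst x + b * snd x))) by ring.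
  assert (Hi : Cconj Ci = (- Ci)%C) by (apply injective_projections; simpl; ring).
  rewrite Hi, Ropp_involutive, !RtoC_opp. f_equal; ring.
Qed.

Lemma Wk_otimes_Wk_lneg (k : Lam) (t : R) (x : R * R) :
  cotimes0 (Wk lam sig mu r k t x) (Wk lam sig mu r (lneg k) t x) =
  CMscale (eta lam sig mu r k t x * eta lam sig mu r k t x)
    (CM_of_RM (rotimes0 (perp (vec k)) (perp (vec k)))).
Proof.
  rewrite Wk_lneg, Wk_Cscalev, Cconjv_Cscalev, cotimes0_Cscalev. f_equal.
  rewrite !Cmult_conj, Cconj_eta, Cconj_cexpi.
  set (e := eta lam sig mu r k t x). set (a := lam * dot (vec k) x).
  transitivity (e * e * (Ci * Cconj Ci) * (cexpi a * cexpi (- a)))%C; [ring|].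
  rewrite cexpi_add, Rplus_opp_r, cexpi_0.
  apply injective_projections; simpl; ring.
Qed.

Lemma Wsum_real (a : Lam -> C) (t : R) (x : R * R) :
  (forall k, a (lneg k) = Cconj (a k)) ->
  Im (fst (Wsum a lam sig mu r t x)) = 0 /\ Im (snd (Wsum a lam sig mu r t x)) = 0.
Proof.
  intros Ha. unfold Wsum. rewrite fst_CVsum, snd_CVsum.
  split; apply Im_Csum_all_Lam; intros k; cbn beta;
    rewrite Ha, Wk_lneg; cbn [fst snd Cconjv]; rewrite Cmult_conj; reflexivity.
Qed.

Lemma eta_conformal (m : Z) (k : Lam) (t : R) :
  lam * sig = 5 * IZR m ->
  exists P Q : Z, (P * P + Q * Q = 25)%Z /\ forall x1 x2,
    eta lam sig mu r k t (x1, x2) =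
    Dirichlet r (conformal_affine m P Q (lam * sig * mu * t) x1 x2).
Proof.
  intros Hm.
  destruct k as [j|j]; destruct j;
    [ exists 3%Z, 4%Z | exists 3%Z, (-4)%Z | exists 4%Z, 3%Z | exists 4%Z, (-3)%Z
    | exists 3%Z, 4%Z | exists 3%Z, (-4)%Z | exists 4%Z, 3%Z | exists 4%Z, (-3)%Z ];
    (split; [reflexivity|]); intros x1 x2;
    unfold eta, conformal_affine, dot, perp; cbn [vecP fst snd]; rewrite Hm;
    f_equal; f_equal; field.
Qed.

Lemma avgT2_Wk_otimes_Wk_lneg (m : Z) (k : Lam) (t : R) :
  lam * sig = 5 * IZR m -> m <> 0%Z ->
  avgT2 (fun x => cotimes0 (Wk lam sig mu r k t x) (Wk lam sig mu r (lneg k) t x)) =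
  CM_of_RM (rotimes0 (perp (vec k)) (perp (vec k))).
Proof.
  intros Hm Hm0.
  destruct (eta_conformal m k t Hm) as [P [Q [HPQ Heta]]].
  erewrite (functional_extensionality _ _ (Wk_otimes_Wk_lneg k t)).
  rewrite (avgT2_CMscale _ _ (RtoC (2 * PI * (2 * PI)))).
  - assert (HPI : 2 * PI * (2 * PI) <> 0) by (generalize PI_RGT_0; nra).
    rewrite <- RtoC_mult, Rinv_l by exact HPI.
    unfold CMscale, CM_of_RM; cbn [c11 c12 c21 c22]. f_equal; ring.
  - eapply is_RInt_T2_ext; [intros x1 x2; rewrite Heta; reflexivity|].
    apply is_RInt_T2_Dirichlet_sqr; lia.
Qed.

End BuildingBlocks.

Theorem lemma4p2
  (lam : R) (r : nat) (mu sig : R)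
  (Hlam : exists m : nat, (0 < m)%nat /\ lam = 5 * INR m)
  (Hr : (0 < r)%nat)
  (Hmu : 0 < mu) (Hsig : 0 < sig)
  (Hlamsig : exists m : nat, lam * sig = 5 * INR m)
  (gamma : Lam -> RMat -> R)
  (Hgpos : forall k A, tracefree_sym A -> 0 < gamma k A)
  (Hgsmooth : forall k, smooth2 (fun a b => gamma k (tfs_of a b)))
  (Hgsym : forall k A, tracefree_sym A -> gamma (lneg k) A = gamma k A)
  (Hgdec : forall A, tracefree_sym A ->
     A = RMsum (fun k => RMscale (gamma k A ^ 2) (rotimes0 (vec k) (vec k))) all_Lam) :
  (forall a : Lam -> C, (forall k, a (lneg k) = Cconj (a k)) ->
     forall t x, Im (fst (Wsum a lam sig mu r t x)) = 0 /\
                 Im (snd (Wsum a lam sig mu r t x)) = 0) /\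
  (forall A, tracefree_sym A -> forall t,
     CMsum (fun k => CMscale (RtoC (gamma k A ^ 2))
              (avgT2 (fun x => cotimes0 (Wk lam sig mu r k t x) (Wk lam sig mu r (lneg k) t x))))
           all_Lam
     = CM_of_RM (RMopp A)).
Proof.
  split; [intros a Ha t x; apply Wsum_real, Ha|].
  intros A HA t.
  destruct Hlamsig as [m Hm]. rewrite INR_IZR_INZ in Hm.
  assert (Hm0 : Z.of_nat m <> 0%Z).
  { intros H0. rewrite H0, Rmult_0_r in Hm. destruct Hlam as [n [Hn ->]].
    apply lt_0_INR in Hn. nra. }
  transitivity (CMsum (fun k => CMscale (RtoC (gamma k A ^ 2))
    (CM_of_RM (rotimes0 (perp (vec k)) (perp (vec k))))) all_Lam).
  - f_equal. extensionality k. rewrite (avgT2_Wk_otimes_Wk_lneg lam sig mu r _ k t Hm Hm0).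
    reflexivity.
  - rewrite CMsum_perp_rotimes0, <- Hgdec by exact HA. reflexivity.
Qed.
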